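(* Assume $f$ is sufficiently smooth (e.g. $f$ has continuous, bounded partial derivatives up to order four on $[a,b]\times\mathbb{R}$, so that the exact solution $y$ is sufficiently smooth and $f$ is Lipschitz in $y$). Let $w_i$ be produced by the RK3GL2 method with parameter $h=(b-a)/(3N)$ and $w_0=y(a)$. Then the global error at the Gauss–Legendre block endpoints satisfies $$\Delta_{3N}=w_{3N}-y(b)=O(h^4)\qquad (h\to 0),$$ i.e. RK3GL2 has global order four, one higher than the global order three of the underlying RK3 method.
   Context: Scalar initial value problem $y'=f(x,y)$, $y(a)=y_0$, $a\le x\le b$. RK3 denotes the explicit third-order Runge–Kutta method $w\mapsto w+\eta F(x,w)$ with step $\eta$, where $\eta F(x,w)=\frac29k_1+\frac39k_2+\frac49k_3$, $k_1=\eta f(x,w)$, $k_2=\eta f(x+\eta/2,\,w+k_1/2)$, $k_3=\eta f(x+3\eta/4,\,w+3k_2/4)$. RK3GL2 method with parameter $h>0$: the interval $[a,b]$ is divided into $N$ equal subintervals $[x_{3k},x_{3k+3}]$ of length $3h$ (so $x_{3k}=a+3kh$ and $3Nh=b-a$). Inside $[x_{3k},x_{3k+3}]$ the two Gauss–Legendre nodes are $x_{3k+1}=x_{3k}+\frac{3h}{2}(1-\frac{1}{\sqrt3})$ and $x_{3k+2}=x_{3k}+\frac{3h}{2}(1+\frac{1}{\sqrt3})$. Set $h_i=x_{i+1}-x_i$. The iteration is: $w_{3k+1}=w_{3k}+h_{3k}F(x_{3k},w_{3k})$, $w_{3k+2}=w_{3k+1}+h_{3k+1}F(x_{3k+1},w_{3k+1})$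 (RK3 steps, with step $h_i$), and $w_{3k+3}=w_{3k}+\frac{3h}{2}\big[f(x_{3k+1},w_{3k+1})+f(x_{3k+2},w_{3k+2})\big]$ (two-point Gauss–Legendre step). The global error is $\Delta_i=w_i-y(x_i)$. *)

From Stdlib Require Import Reals Lra Lia.
From Coquelicot Require Import Coquelicot.
Open Scope R_scope.

Definition rk3_step (f : R -> R -> R) (x w eta : R) : R :=
  let k1 := eta * f x w in
  let k2 := eta * f (x + eta / 2) (w + k1 / 2) in
  let k3 := eta * f (x + 3 * eta / 4) (w + 3 * k2 / 4) in
  w + (2/9) * k1 + (3/9) * k2 + (4/9) * k3.

Definition gl_node1 (x0 h : R) : R := x0 + (3 * h / 2) * (1 - 1 / sqrt 3).
Definition gl_node2 (x0 h : R) : R := x0 + (3 * h / 2) * (1 + 1 / sqrt 3).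

(* One RK3GL2 block: from w_{3k} at x_{3k} = x0 to w_{3k+3}. *)
Definition rk3gl2_block (f : R -> R -> R) (x0 h w0 : R) : R :=
  let x1 := gl_node1 x0 h in
  let x2 := gl_node2 x0 h in
  let w1 := rk3_step f x0 w0 (x1 - x0) in
  let w2 := rk3_step f x1 w1 (x2 - x1) in
  w0 + (3 * h / 2) * (f x1 w1 + f x2 w2).

(* rk3gl2_w f a h w0 k = w_{3k}, with x_{3k} = a + 3 k h. *)
Fixpoint rk3gl2_w (f : R -> R -> R) (a h w0 : R) (k : nat) : R :=
  match k with
  | O => w0
  | S k' => rk3gl2_block f (a + 3 * INR k' * h) h (rk3gl2_w f a h w0 k')
  end.

(* f has continuous, bounded partial derivatives up to order four on
   [a,b] x R.  D i j x y stands for d^i/dx^i d^j/dy^j f (x,y). *)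
Definition smooth4_bounded (a b : R) (f : R -> R -> R) : Prop :=
  exists D : nat -> nat -> R -> R -> R,
    (forall x y, D O O x y = f x y) /\
    (forall i j x y, (i + j < 4)%nat -> a <= x <= b ->
        is_derive (fun t => D i j t y) x (D (S i) j x y) /\
        is_derive (fun t => D i j x t) y (D i (S j) x y)) /\
    (forall i j x y, (i + j <= 4)%nat -> a <= x <= b ->
        continuous (fun p : R * R => D i j (fst p) (snd p)) (x, y)) /\
    (exists M, forall i j x y, (i + j <= 4)%nat -> a <= x <= b ->
        Rabs (D i j x y) <= M).

From Stdlib Require Import Reals Lra Lia Factorial.
From Coquelicot Require Import Coquelicot.
Open Scope R_scope.

(* Each RK3 sub-step has local error O(h^4); weighted by 3h/2 in the Gauss-Legendre step it
   contributes O(h^5) to a block.  The two-point Gauss-Legendre rule integrates the cubic Taylor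
   polynomial of y' = f(x, y(x)) exactly, so the quadrature error is O(h^5) as well.  A block is
   therefore accurate to O(h^5) and Lipschitz with constant 1 + O(h) in its starting value, and a
   discrete Gronwall argument over the N = O(1/h) blocks gives a global error O(h^4).
   The expansions of y are obtained without a chain rule for f: the order-k expansion of y, put
   into Taylor's formula for f in two variables, expands y' to order k, and integrating it by the
   mean value theorem gives the order-(k+1) expansion of y. *)

(** * Mean value and Taylor bounds *)

Lemma MVT_abs_bound (g dg : R -> R) (x s c : R) (n : nat) :
  0 <= c ->
  (forall t, Rmin x (x + s) <= t <= Rmax x (x + s) -> is_derive g t (dg t)) ->
  (forall t, Rmin x (x + s) <= t <= Rmax x (x + s) -> Rabs (dg t) <= c * Rabs (t - x) ^ n) ->
  Rabs (g (x + s) - g x) <= c * Rabs s ^ S n.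
Proof.
  intros Hc Hd Hb.
  destruct (MVT_gen g x (x + s) dg) as [xi [Hxi ->]].
  - intros t Ht. apply Hd. lra.
  - intros t Ht. apply continuity_pt_filterlim, (ex_derive_continuous g).
    exists (dg t). exact (Hd t Ht).
  - replace (x + s - x) with s by ring.
    assert (Hxs : Rabs (xi - x) <= Rabs s).
    { revert Hxi. unfold Rmin, Rmax. destruct (Rle_dec x (x + s));
      unfold Rabs; repeat destruct Rcase_abs; lra. }
    assert (Hpow : Rabs (xi - x) ^ n <= Rabs s ^ n)
      by (apply pow_incr; split; [apply Rabs_pos | exact Hxs]).
    pose proof (Hb xi Hxi). pose proof (Rabs_pos s). pose proof (Rabs_pos (dg xi)).
    rewrite Rabs_mult, <- tech_pow_Rmult.
    apply Rle_trans with (c * Rabs (xi - x) ^ n * Rabs s); [now apply Rmult_le_compat_r|].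
    assert (c * Rabs (xi - x) ^ n <= c * Rabs s ^ n) by (now apply Rmult_le_compat_l).
    nra.
Qed.

Lemma is_derive_taylor_sum (c : nat -> R) (m : nat) (x t : R) :
  is_derive (fun u => sum_f_R0 (fun k => c k * (u - x) ^ k / INR (fact k)) (S m)) t
    (sum_f_R0 (fun k => c (S k) * (t - x) ^ k / INR (fact k)) m).
Proof.
  apply (is_derive_ext
    (fun u => c 0%nat + sum_n (fun k => c (S k) * (u - x) ^ S k / INR (fact (S k))) m)).
  { intros u. rewrite sum_n_Reals, (decomp_sum _ (S m)) by lia. simpl. field. }
  rewrite <- sum_n_Reals, <- (Rplus_0_l (sum_n _ m)).
  apply (is_derive_plus (fun _ => c 0%nat));
    [apply (is_derive_const (K := R_AbsRing) (V := R_NormedModule)) |].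
  apply (is_derive_sum_n (K := R_AbsRing) (V := R_NormedModule)). intros k _.
  apply (is_derive_ext (fun u => c (S k) / INR (fact (S k)) * (u - x) ^ S k)).
  { intros u. unfold Rdiv. rewrite Rmult_assoc, (Rmult_comm (/ _)), <- Rmult_assoc. reflexivity. }
  replace (c (S k) * (t - x) ^ k / INR (fact k))
    with (c (S k) / INR (fact (S k)) * (INR (S k) * 1 * (t - x) ^ Nat.pred (S k))).
  2:{ rewrite fact_simpl, mult_INR. simpl Nat.pred.
      field. split; [apply INR_fact_neq_0 | apply not_0_INR; lia]. }
  apply is_derive_scal, (is_derive_pow (fun u => u - x)).
  apply (is_derive_ext (fun u => u + - x)); [reflexivity|].
  rewrite <- (Rplus_0_r 1). apply (is_derive_plus (fun u => u) (fun _ => - x)).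
  - apply (is_derive_id (K := R_AbsRing)).
  - apply (is_derive_const (K := R_AbsRing) (V := R_NormedModule)).
Qed.

Lemma taylor_remainder_bound (G : nat -> R -> R) (m : nat) (M lo hi x s : R) :
  0 <= M ->
  (forall k t, (k <= m)%nat -> lo <= t <= hi -> is_derive (G k) t (G (S k) t)) ->
  (forall t, lo <= t <= hi -> Rabs (G (S m) t) <= M) ->
  lo <= x <= hi -> lo <= x + s <= hi ->
  Rabs (G 0%nat (x + s) - sum_f_R0 (fun k => G k x * s ^ k / INR (fact k)) m)
    <= M * Rabs s ^ S m.
Proof.
  revert G s. induction m as [|m IH]; intros G s HM Hd Hb Hx Hxs;
    assert (Hseg : forall t, Rmin x (x + s) <= t <= Rmax x (x + s) -> lo <= t <= hi)
      by (intros t; unfold Rmin, Rmax; destruct (Rle_dec x (x + s)); lra).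
  - replace (sum_f_R0 _ 0) with (G 0%nat x) by (simpl; field).
    apply (MVT_abs_bound _ (G 1%nat)); [exact HM | |].
    + intros t Ht. apply Hd; [lia | auto].
    + intros t Ht. rewrite pow_O, Rmult_1_r. auto.
  - set (g t := G 0%nat t - sum_f_R0 (fun k => G k x * (t - x) ^ k / INR (fact k)) (S m)).
    assert (Hgx : g x = 0).
    { unfold g. rewrite (decomp_sum _ (S m)) by lia. rewrite sum_eq_R0.
      - simpl. field.
      - intros n _. cbv beta. rewrite Rminus_diag, pow_i by lia. unfold Rdiv. ring. }
    replace (G 0%nat (x + s) - _) with (g (x + s) - g x)
      by (rewrite Hgx; unfold g; replace (x + s - x) with s by ring; ring).
    apply (MVT_abs_bound g
      (fun t => G 1%nat t - sum_f_R0 (fun k => G (S k) x * (t - x) ^ k / INR (fact k)) m));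
      [exact HM | |].
    + intros t Ht. apply (is_derive_minus (G 0%nat)); [apply Hd; [lia | auto] |].
      apply (is_derive_taylor_sum (fun k => G k x)).
    + intros t Ht. replace t with (x + (t - x)) at 1 by ring.
      apply (IH (fun k => G (S k))); auto.
      * intros k u Hk Hu. apply Hd; [lia | auto].
      * replace (x + (t - x)) with t by ring. auto.
Qed.

Definition taylor2 (D : nat -> nat -> R -> R -> R) (m : nat) (x z p q : R) : R :=
  sum_f_R0 (fun i => sum_f_R0 (fun j =>
    D i j x z * p ^ i / INR (fact i) * q ^ j / INR (fact j)) (m - i)) m.

Section Taylor2.
Variables (a b M : R) (D : nat -> nat -> R -> R -> R).
Hypothesis D_derive : forall i j x z, (i + j < 4)%nat -> a <= x <= b ->
  is_derive (fun t => D i j t z) x (D (S i) j x z) /\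
  is_derive (fun t => D i j x t) z (D i (S j) x z).
Hypothesis D_bound : forall i j x z, (i + j <= 4)%nat -> a <= x <= b -> Rabs (D i j x z) <= M.

Lemma taylor2_remainder_bound m x z p q :
  (m <= 3)%nat -> a <= x -> 0 <= p -> x + p <= b ->
  Rabs (D 0 0 (x + p) (z + q) - taylor2 D m x z p q)
    <= (INR m + 2) * M * (p + Rabs q) ^ S m.
Proof.
  intros Hm Hx Hp Hxp.
  assert (HM : 0 <= M)
    by (apply Rle_trans with (1 := Rabs_pos (D 0 0 x z)), D_bound; [lia | lra]).
  assert (Hq : 0 <= Rabs q) by apply Rabs_pos.
  set (r := p + Rabs q).
  set (inner i := sum_f_R0 (fun j => D i j x z * q ^ j / INR (fact j)) (m - i)).
  (* expand first in x at height z + q, then each coefficient in the second variable *)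
  assert (Hx_exp : Rabs (D 0 0 (x + p) (z + q)
      - sum_f_R0 (fun i => D i 0 x (z + q) * p ^ i / INR (fact i)) m) <= M * r ^ S m).
  { apply Rle_trans with (M * Rabs p ^ S m).
    - apply (taylor_remainder_bound (fun k t => D k 0 t (z + q)) m M a b); auto; try lra.
      + intros k t Hk Ht. apply D_derive; [lia | auto].
      + intros t Ht. apply D_bound; [lia | auto].
    - apply Rmult_le_compat_l, pow_incr; [exact HM |]. unfold r. rewrite Rabs_pos_eq; lra. }
  assert (Hz_exp : forall i, (i <= m)%nat ->
      Rabs (D i 0 x (z + q) - inner i) <= M * r ^ S (m - i)).
  { intros i Hi. apply Rle_trans with (M * Rabs q ^ S (m - i)).
    - apply (taylor_remainder_bound (fun k s => D i k x s) (m - i) M (z - Rabs q) (z + Rabs q));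
        auto.
      + intros k t Hk Ht. apply D_derive; [lia | lra].
      + intros t Ht. apply D_bound; [lia | lra].
      + lra.
      + unfold Rabs; destruct Rcase_abs; lra.
    - apply Rmult_le_compat_l, pow_incr; [exact HM |]. unfold r. lra. }
  replace (D 0 0 (x + p) (z + q) - taylor2 D m x z p q) with
    ((D 0 0 (x + p) (z + q) - sum_f_R0 (fun i => D i 0 x (z + q) * p ^ i / INR (fact i)) m)
     + sum_f_R0 (fun i => p ^ i / INR (fact i) * (D i 0 x (z + q) - inner i)) m).
  2:{ assert (HT : taylor2 D m x z p q = sum_f_R0 (fun i => p ^ i / INR (fact i) * inner i) m).
      { unfold taylor2, inner. apply sum_eq. intros i _. rewrite scal_sum.
        apply sum_eq. intros j _. field. split; apply INR_fact_neq_0. }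
      rewrite HT.
      replace (sum_f_R0 (fun i => p ^ i / INR (fact i) * (D i 0 x (z + q) - inner i)) m) with
        (sum_f_R0 (fun i => D i 0 x (z + q) * p ^ i / INR (fact i)) m
         - sum_f_R0 (fun i => p ^ i / INR (fact i) * inner i) m); [ring |].
      rewrite <- minus_sum. apply sum_eq. intros i _. unfold Rdiv. ring. }
  assert (Hr : 0 <= r) by (unfold r; lra).
  eapply Rle_trans; [apply Rabs_triang |].
  apply Rle_trans with (M * r ^ S m + sum_f_R0 (fun _ => M * r ^ S m) m).
  - apply Rplus_le_compat; [exact Hx_exp |].
    eapply Rle_trans; [apply sum_f_R0_triangle |]. apply sum_Rle. intros i Hi.
    rewrite Rabs_mult.
    replace (M * r ^ S m) with (r ^ i * (M * r ^ S (m - i)))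
      by (replace (S m) with (i + S (m - i))%nat by lia; rewrite pow_add; ring).
    apply Rmult_le_compat; [apply Rabs_pos | apply Rabs_pos | | auto].
    assert (Hfact : 1 <= INR (fact i)) by (apply (le_INR 1), lt_O_fact).
    assert (Hpi : 0 <= p ^ i) by (apply pow_le; lra).
    assert (p ^ i <= r ^ i) by (apply pow_incr; unfold r; lra).
    rewrite Rabs_pos_eq by (apply Rdiv_le_0_compat; lra).
    apply Rle_trans with (p ^ i); [| assumption].
    unfold Rdiv. rewrite <- (Rmult_1_r (p ^ i)) at 2. apply Rmult_le_compat_l; [lra |].
    rewrite <- Rinv_1. apply Rinv_le_contravar; lra.
  - rewrite sum_cte, S_INR. right. ring.
Qed.
End Taylor2.

(** * Estimates O(p^n), uniform for a <= x <= x + p <= b *)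

Section BigO.
Variables a b : R.
Hypothesis Hab : a < b.

Definition bigO (n : nat) (u : R -> R -> R) : Prop :=
  exists K, 0 <= K /\
    forall x p, a <= x -> 0 <= p -> x + p <= b -> Rabs (u x p) <= K * p ^ n.

Lemma bigO_ext n (u v : R -> R -> R) :
  (forall x p, a <= x -> 0 <= p -> x + p <= b -> v x p = u x p) -> bigO n u -> bigO n v.
Proof.
  intros Huv [K [HK Hu]]. exists K. split; [exact HK |].
  intros x p Hx Hp Hxp. rewrite Huv by assumption. auto.
Qed.

Lemma bigO_const c : bigO 0 (fun _ _ => c).
Proof. exists (Rabs c). split; [apply Rabs_pos |]. intros. lra. Qed.

Lemma bigO_step : bigO 1 (fun _ p => p).
Proof. exists 1. split; [lra |]. intros x p _ Hp _. rewrite Rabs_pos_eq; lra. Qed.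

Lemma bigO_weaken m n u : (n <= m)%nat -> bigO m u -> bigO n u.
Proof.
  intros Hnm [K [HK Hu]]. exists (K * (b - a) ^ (m - n)).
  split; [apply Rmult_le_pos, pow_le; lra |].
  intros x p Hx Hp Hxp. eapply Rle_trans; [apply Hu; assumption |].
  replace (p ^ m) with (p ^ (m - n) * p ^ n) by (rewrite <- pow_add; f_equal; lia).
  rewrite <- Rmult_assoc. apply Rmult_le_compat_r; [apply pow_le; lra |].
  apply Rmult_le_compat_l, pow_incr; lra.
Qed.

Lemma bigO_add m n u v :
  bigO m u -> bigO n v -> bigO (Nat.min m n) (fun x p => u x p + v x p).
Proof.
  intros Hu Hv.
  destruct (bigO_weaken m (Nat.min m n) u ltac:(lia) Hu) as [K1 [HK1 Hu']].
  destruct (bigO_weaken n (Nat.min m n) v ltac:(lia) Hv) as [K2 [HK2 Hv']].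
  exists (K1 + K2). split; [lra |]. intros x p Hx Hp Hxp.
  eapply Rle_trans; [apply Rabs_triang |].
  specialize (Hu' x p Hx Hp Hxp). specialize (Hv' x p Hx Hp Hxp). lra.
Qed.

Lemma bigO_opp n u : bigO n u -> bigO n (fun x p => - u x p).
Proof. intros [K [HK Hu]]. exists K. split; [exact HK |]. intros. rewrite Rabs_Ropp. auto. Qed.

Lemma bigO_sub m n u v :
  bigO m u -> bigO n v -> bigO (Nat.min m n) (fun x p => u x p - v x p).
Proof. intros Hu Hv. apply (bigO_add m n u (fun x p => - v x p) Hu), bigO_opp, Hv. Qed.

Lemma bigO_mul m n u v : bigO m u -> bigO n v -> bigO (m + n) (fun x p => u x p * v x p).
Proof.
  intros [K1 [HK1 Hu]] [K2 [HK2 Hv]]. exists (K1 * K2). split; [apply Rmult_le_pos; lra |].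
  intros x p Hx Hp Hxp. rewrite Rabs_mult, pow_add.
  replace (K1 * K2 * (p ^ m * p ^ n)) with ((K1 * p ^ m) * (K2 * p ^ n)) by ring.
  apply Rmult_le_compat; auto; apply Rabs_pos.
Qed.

Lemma bigO_pow m k u : bigO m u -> bigO (k * m) (fun x p => u x p ^ k).
Proof.
  intros Hu. induction k as [|k IH].
  - apply (bigO_ext 0 (fun _ _ => 1)); [reflexivity | apply bigO_const].
  - apply (bigO_mul m (k * m) u (fun x p => u x p ^ k) Hu IH).
Qed.

Lemma bigO_div m u c : bigO m u -> bigO m (fun x p => u x p / c).
Proof.
  intros Hu. rewrite <- (Nat.add_0_r m).
  apply (bigO_mul m 0 u (fun _ _ => / c) Hu), bigO_const.
Qed.

End BigO.

(** * Gauss-Legendre rule and discrete Gronwall inequality *)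

Lemma inv_sqrt3_facts : 0 < 1 / sqrt 3 < 1 /\ 1 / sqrt 3 * (1 / sqrt 3) = 1 / 3.
Proof.
  assert (H3 : sqrt 3 * sqrt 3 = 3) by (apply sqrt_sqrt; lra).
  assert (Hpos : 0 < sqrt 3) by (apply sqrt_lt_R0; lra).
  split; [split |].
  - apply Rdiv_lt_0_compat; lra.
  - apply Rmult_lt_reg_r with (sqrt 3); [exact Hpos |].
    unfold Rdiv. rewrite Rmult_assoc, Rinv_l by lra. nra.
  - replace (1 / sqrt 3 * (1 / sqrt 3)) with (1 / (sqrt 3 * sqrt 3)) by (field; lra).
    now rewrite H3.
Qed.

Lemma gl_nodes_ordered x h : 0 <= h ->
  x <= gl_node1 x h /\ gl_node1 x h <= gl_node2 x h /\ gl_node2 x h <= x + 3 * h.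
Proof.
  intros Hh. destruct inv_sqrt3_facts as [[Hs0 Hs1] _].
  unfold gl_node1, gl_node2. repeat split; nra.
Qed.

Lemma gauss_legendre2_exact_cubic (c0 c1 c2 c3 H s : R) : s * s = 1 / 3 ->
  let P t := c0 + c1 * t + c2 * t ^ 2 + c3 * t ^ 3 in
  H / 2 * (P (H / 2 * (1 - s)) + P (H / 2 * (1 + s)))
    = c0 * H + c1 * H ^ 2 / 2 + c2 * H ^ 3 / 3 + c3 * H ^ 4 / 4.
Proof.
  intros Hs P. apply Rminus_diag_uniq. unfold P.
  transitivity ((s * s - 1 / 3) * (2 * c2 * (H / 2) ^ 3 + 6 * c3 * (H / 2) ^ 4)); [field |].
  rewrite Hs. ring.
Qed.

Lemma one_plus_pow_le_exp t N : 0 <= t -> (1 + t) ^ N <= exp (INR N * t).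
Proof.
  intros Ht. induction N as [|N IH].
  - rewrite Rmult_0_l, exp_0. simpl. lra.
  - rewrite S_INR, Rmult_plus_distr_r, Rmult_1_l, exp_plus, Rmult_comm. simpl.
    apply Rmult_le_compat; [lra | apply pow_le; lra | apply exp_ineq1_le | exact IH].
Qed.

Lemma error_recursion_bound (e : nat -> R) (L c : R) (N : nat) :
  0 <= L -> 0 <= c -> e 0%nat = 0 ->
  (forall k, (k < N)%nat -> e (S k) <= (1 + L) * e k + c) ->
  e N <= INR N * (1 + L) ^ N * c.
Proof.
  intros HL Hc He0 Hstep. induction N as [|N IH].
  - rewrite He0. simpl. lra.
  - assert (HSN : 1 <= (1 + L) * (1 + L) ^ N) by (apply (pow_R1_Rle (1 + L) (S N)); lra).
    assert (HNc : 0 <= INR N * c) by (apply Rmult_le_pos; [apply pos_INR | exact Hc]).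
    specialize (IH ltac:(intros k Hk; apply Hstep; lia)).
    eapply Rle_trans; [apply Hstep; lia |].
    rewrite S_INR. simpl pow.
    assert ((1 + L) * e N <= (1 + L) * (INR N * (1 + L) ^ N * c)) by (apply Rmult_le_compat_l; lra).
    assert (c <= (1 + L) * (1 + L) ^ N * c) by (rewrite <- (Rmult_1_l c) at 1; nra).
    nra.
Qed.

(** * Error analysis of RK3GL2 *)

Section ODE.
Variables (a b M : R) (f : R -> R -> R) (y : R -> R) (D : nat -> nat -> R -> R -> R).
Hypothesis Hab : a < b.
Hypothesis D_f : forall x z, D 0 0 x z = f x z.
Hypothesis D_derive : forall i j x z, (i + j < 4)%nat -> a <= x <= b ->
  is_derive (fun t => D i j t z) x (D (S i) j x z) /\
  is_derive (fun t => D i j x t) z (D i (S j) x z).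
Hypothesis D_bound : forall i j x z, (i + j <= 4)%nat -> a <= x <= b -> Rabs (D i j x z) <= M.
Hypothesis y_ode : forall x, a <= x <= b -> is_derive y x (f x (y x)).

Lemma M_nonneg : 0 <= M.
Proof. apply Rle_trans with (1 := Rabs_pos (D 0 0 a 0)), D_bound; [lia | lra]. Qed.

Lemma f_bound x z : a <= x <= b -> Rabs (f x z) <= M.
Proof. intros Hx. rewrite <- D_f. apply D_bound; [lia | exact Hx]. Qed.

Lemma f_lipschitz x u v : a <= x <= b -> Rabs (f x u - f x v) <= M * Rabs (u - v).
Proof.
  intros Hx. replace u with (v + (u - v)) at 1 by ring.
  rewrite <- (pow_1 (Rabs (u - v))).
  apply (MVT_abs_bound (f x) (D 0 1 x) v (u - v) M 0 M_nonneg).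
  - intros t _. apply (is_derive_ext (D 0 0 x)); [intros; apply D_f |].
    apply D_derive; [lia | exact Hx].
  - intros t _. rewrite pow_O, Rmult_1_r. apply D_bound; [lia | exact Hx].
Qed.

Lemma y_increment_bound x p :
  a <= x -> 0 <= p -> x + p <= b -> Rabs (y (x + p) - y x) <= M * p.
Proof.
  intros Hx Hp Hxp. replace (M * p) with (M * Rabs p ^ 1) by (rewrite pow_1, Rabs_pos_eq; auto).
  apply (MVT_abs_bound y (fun t => f t (y t)) x p M 0 M_nonneg).
  - intros t Ht. apply y_ode. revert Ht. unfold Rmin, Rmax. destruct (Rle_dec x (x + p)); lra.
  - intros t Ht. rewrite pow_O, Rmult_1_r. apply f_bound.
    revert Ht. unfold Rmin, Rmax. destruct (Rle_dec x (x + p)); lra.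
Qed.

Lemma bigO_D i j : (i + j <= 4)%nat -> bigO a b 0 (fun x p => D i j x (y x)).
Proof.
  intros Hij. exists M. split; [exact M_nonneg |].
  intros x p Hx Hp Hxp. rewrite pow_O, Rmult_1_r. apply D_bound; [exact Hij | lra].
Qed.

Ltac bigO_auto := first
  [ eassumption
  | apply bigO_const
  | apply bigO_step
  | apply bigO_D; lia
  | lazymatch goal with
    | |- bigO _ _ _ (fun x p => @?U x p + @?V x p) => eapply (bigO_add _ _ Hab _ _ U V)
    | |- bigO _ _ _ (fun x p => @?U x p - @?V x p) => eapply (bigO_sub _ _ Hab _ _ U V)
    | |- bigO _ _ _ (fun x p => @?U x p * @?V x p) => eapply (bigO_mul _ _ _ _ U V)
    | |- bigO _ _ _ (fun x p => - @?U x p) => eapply (bigO_opp _ _ _ U)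
    | |- bigO _ _ _ (fun x p => @?U x p ^ ?K) => eapply (bigO_pow _ _ _ K U)
    | |- bigO _ _ _ (fun x p => @?U x p / ?C) => eapply (bigO_div _ _ _ U C)
    end; bigO_auto ].

(* Replaces the expression by its normal form (computed by [field_simplify] on a copy), in which
   the low-order terms have cancelled; [bigO_auto] then reads off the order of every surviving
   monomial. *)
Ltac bigO_by_expansion :=
  eapply bigO_ext;
  [ let x := fresh "x" in let p := fresh "p" in
    intros x p _ _ _; cbv beta;
    lazymatch goal with |- ?body = ?V x p =>
      let nf := fresh in
      assert (nf : body = body) by reflexivity;
      field_simplify in nf;
      lazymatch type of nf with ?N = _ =>
        let F := eval pattern x, p in N in
        lazymatch F with ?G _ _ => unify V G end end;
      clear nf; cbv beta; field
    end
  | eapply (bigO_weaken _ _ Hab); [| bigO_auto]; cbn; lia ].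

Lemma taylor2_bigO m (P Q : R -> R -> R) c :
  (m <= 3)%nat -> 0 <= c ->
  (forall x p, a <= x -> 0 <= p -> x + p <= b ->
     0 <= P x p /\ x + P x p <= b /\ P x p + Rabs (Q x p) <= c * p) ->
  bigO a b (S m)
    (fun x p => f (x + P x p) (y x + Q x p) - taylor2 D m x (y x) (P x p) (Q x p)).
Proof.
  intros Hm Hc HPQ. exists ((INR m + 2) * M * c ^ S m).
  assert (HmM : 0 <= (INR m + 2) * M)
    by (apply Rmult_le_pos; [pose proof (pos_INR m); lra | exact M_nonneg]).
  split; [apply Rmult_le_pos, pow_le; assumption |].
  intros x p Hx Hp Hxp. destruct (HPQ x p Hx Hp Hxp) as [HP [HxP HPQc]].
  rewrite <- D_f.
  eapply Rle_trans; [apply (taylor2_remainder_bound a b M D); auto |].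
  replace ((INR m + 2) * M * c ^ S m * p ^ S m) with ((INR m + 2) * M * (c * p) ^ S m)
    by (rewrite Rpow_mult_distr; ring).
  apply Rmult_le_compat_l, pow_incr; [exact HmM |]. split; [|exact HPQc].
  pose proof (Rabs_pos (Q x p)). lra.
Qed.

Definition Dy (i j : nat) (x : R) : R := D i j x (y x).

(* [ycoef k x] is y^(k+1)(x) / k!, written through the partial derivatives of f along the
   solution. *)
Definition ycoef (k : nat) (x : R) : R :=
  match k with
  | 0%nat => Dy 0 0 x
  | 1%nat => Dy 1 0 x + Dy 0 0 x * Dy 0 1 x
  | 2%nat => (Dy 2 0 x + 2 * Dy 0 0 x * Dy 1 1 x + Dy 0 0 x ^ 2 * Dy 0 2 x
              + Dy 0 1 x * (Dy 1 0 x + Dy 0 0 x * Dy 0 1 x)) / 2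
  | 3%nat => (Dy 3 0 x + 3 * Dy 0 0 x * Dy 2 1 x + 3 * Dy 0 0 x ^ 2 * Dy 1 2 x
              + Dy 0 0 x ^ 3 * Dy 0 3 x
              + 3 * (Dy 1 0 x + Dy 0 0 x * Dy 0 1 x) * (Dy 1 1 x + Dy 0 0 x * Dy 0 2 x)
              + Dy 0 1 x * (Dy 2 0 x + 2 * Dy 0 0 x * Dy 1 1 x + Dy 0 0 x ^ 2 * Dy 0 2 x
                            + Dy 0 1 x * (Dy 1 0 x + Dy 0 0 x * Dy 0 1 x))) / 6
  | _ => 0
  end.

Definition dpoly (m : nat) (x p : R) : R := sum_f_R0 (fun k => ycoef k x * p ^ k) m.

Definition ypoly (m : nat) (x p : R) : R :=
  sum_f_R0 (fun k => ycoef k x * p ^ S k / INR (S k)) m.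

Lemma is_derive_ypoly m x p : is_derive (ypoly m x) p (dpoly m x p).
Proof.
  unfold ypoly, dpoly. rewrite <- sum_n_Reals.
  apply (is_derive_ext (fun u => sum_n (fun k => ycoef k x * u ^ S k / INR (S k)) m)).
  { intros u. apply sum_n_Reals. }
  apply (is_derive_sum_n (K := R_AbsRing) (V := R_NormedModule)). intros k _.
  apply (is_derive_ext (fun u => ycoef k x / INR (S k) * u ^ S k)).
  { intros u. unfold Rdiv. rewrite Rmult_assoc, (Rmult_comm (/ _)), <- Rmult_assoc. reflexivity. }
  replace (ycoef k x * p ^ k) with (ycoef k x / INR (S k) * (INR (S k) * 1 * p ^ Nat.pred (S k)))
    by (simpl Nat.pred; field; apply not_0_INR; lia).
  apply is_derive_scal, (is_derive_pow (fun u => u)), (is_derive_id (K := R_AbsRing)).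
Qed.

Lemma ypoly_0 m x : ypoly m x 0 = 0.
Proof.
  unfold ypoly. rewrite sum_eq_R0; [reflexivity |].
  intros k _. rewrite pow_i by lia. unfold Rdiv. ring.
Qed.

Lemma bigO_integrate n (P Pd : R -> R -> R) :
  (forall x p, is_derive (P x) p (Pd x p)) -> (forall x, P x 0 = 0) ->
  bigO a b n (fun x p => f (x + p) (y (x + p)) - Pd x p) ->
  bigO a b (S n) (fun x p => y (x + p) - y x - P x p).
Proof.
  intros HP HP0 [K [HK Hbound]]. exists K. split; [exact HK |].
  intros x p Hx Hp Hxp.
  assert (Hseg : forall t, Rmin x (x + p) <= t <= Rmax x (x + p) -> x <= t <= x + p)
    by (intros t; unfold Rmin, Rmax; destruct (Rle_dec x (x + p)); lra).
  set (g t := y t - P x (t - x)).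
  replace (y (x + p) - y x - P x p) with (g (x + p) - g x)
    by (unfold g; replace (x + p - x) with p by ring; rewrite Rminus_diag, HP0; ring).
  rewrite <- (Rabs_pos_eq p Hp) at 2.
  apply (MVT_abs_bound g (fun t => f t (y t) - Pd x (t - x))); [exact HK | |].
  - intros t Ht. specialize (Hseg t Ht).
    apply (is_derive_minus y); [apply y_ode; lra |].
    rewrite <- (Rmult_1_l (Pd x (t - x))).
    apply (is_derive_comp (P x) (fun t => t - x)); [apply HP |].
    rewrite <- (Rminus_0_r 1).
    apply (is_derive_minus (fun t => t) (fun _ => x)).
    + apply (is_derive_id (K := R_AbsRing)).
    + apply (is_derive_const (K := R_AbsRing) (V := R_NormedModule)).
  - intros t Ht. specialize (Hseg t Ht).
    specialize (Hbound x (t - x) Hx ltac:(lra) ltac:(lra)).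
    replace (x + (t - x)) with t in Hbound by ring.
    rewrite (Rabs_pos_eq (t - x)) by lra. exact Hbound.
Qed.

Lemma taylor2_compose_ypoly m (E : R -> R -> R) :
  (m <= 2)%nat -> bigO a b (S (S m)) E ->
  bigO a b (S (S m))
    (fun x p => taylor2 D (S m) x (y x) p (ypoly m x p + E x p) - dpoly (S m) x p).
Proof.
  intros Hm HE.
  destruct m as [|[|[|]]]; [..| lia]; unfold taylor2, ypoly, dpoly, ycoef, Dy; simpl;
    bigO_by_expansion.
Qed.

Lemma taylor2_along_solution m : (m <= 3)%nat ->
  bigO a b (S m)
    (fun x p => f (x + p) (y (x + p)) - taylor2 D m x (y x) p (y (x + p) - y x)).
Proof.
  intros Hm.
  eapply bigO_ext;
    [| apply (taylor2_bigO m (fun _ p => p) (fun x p => y (x + p) - y x) (1 + M) Hm)].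
  - intros x p _ _ _. cbv beta. now replace (y x + (y (x + p) - y x)) with (y (x + p)) by ring.
  - pose proof M_nonneg. lra.
  - intros x p Hx Hp Hxp. pose proof (y_increment_bound x p Hx Hp Hxp). pose proof M_nonneg.
    repeat split; lra.
Qed.

Lemma ydot_expansion m : (m <= 3)%nat ->
  bigO a b (S m) (fun x p => f (x + p) (y (x + p)) - dpoly m x p).
Proof.
  induction m as [|m IH]; intros Hm.
  - eapply bigO_ext; [| exact (taylor2_along_solution 0 Hm)].
    intros x p _ _ _. unfold taylor2, dpoly, ycoef, Dy. simpl. field.
  - set (E x p := y (x + p) - y x - ypoly m x p).
    assert (HE : bigO a b (S (S m)) E)
      by (apply (bigO_integrate _ _ _ (is_derive_ypoly m) (ypoly_0 m)), IH; lia).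
    rewrite <- (Nat.min_id (S (S m))).
    eapply bigO_ext; [| exact (bigO_add _ _ Hab _ _ _ _ (taylor2_along_solution (S m) Hm)
                                         (taylor2_compose_ypoly m E ltac:(lia) HE))].
    intros x p _ _ _. cbv beta. unfold E. replace (ypoly m x p + _) with (y (x + p) - y x) by ring.
    ring.
Qed.

Lemma y_expansion m : (m <= 3)%nat ->
  bigO a b (S (S m)) (fun x p => y (x + p) - y x - ypoly m x p).
Proof.
  intros Hm. exact (bigO_integrate _ _ _ (is_derive_ypoly m) (ypoly_0 m) (ydot_expansion m Hm)).
Qed.

(* [R2] and [R3] stand for the Taylor remainders of the second and third stage slopes, [E] for
   that of y; the cancellation of all terms below p^4 is the set of third-order conditions of the
   RK3 tableau. *)
Lemma rk3_order_conditions (R2 R3 E : R -> R -> R) :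
  bigO a b 3 R2 -> bigO a b 3 R3 -> bigO a b 4 E ->
  bigO a b 4 (fun x p =>
    let k2 := R2 x p + taylor2 D 2 x (y x) (p / 2) (p * Dy 0 0 x / 2) in
    2 / 9 * p * Dy 0 0 x + 3 / 9 * p * k2
    + 4 / 9 * p * (R3 x p + taylor2 D 2 x (y x) (3 * p / 4) (3 * (p * k2) / 4))
    - ypoly 2 x p - E x p).
Proof.
  intros H2 H3 HE. unfold taylor2, ypoly, ycoef, Dy. simpl. bigO_by_expansion.
Qed.

Lemma rk3_local_error : bigO a b 4 (fun x p => rk3_step f x (y x) p - y (x + p)).
Proof.
  pose proof M_nonneg as HM.
  set (slope2 x p := f (x + p / 2) (y x + p * f x (y x) / 2)).
  set (R2 x p := slope2 x p - taylor2 D 2 x (y x) (p / 2) (p * f x (y x) / 2)).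
  set (R3 x p := f (x + 3 * p / 4) (y x + 3 * (p * slope2 x p) / 4)
                 - taylor2 D 2 x (y x) (3 * p / 4) (3 * (p * slope2 x p) / 4)).
  assert (H2 : bigO a b 3 R2).
  { apply (taylor2_bigO 2 (fun _ p => p / 2) (fun x p => p * f x (y x) / 2) (1 + M));
      [lia | lra |].
    intros x p Hx Hp Hxp. pose proof (f_bound x (y x) ltac:(lra)).
    rewrite Rabs_div, Rabs_mult, (Rabs_pos_eq p), (Rabs_pos_eq 2) by lra. nra. }
  assert (H3 : bigO a b 3 R3).
  { apply (taylor2_bigO 2 (fun _ p => 3 * p / 4) (fun x p => 3 * (p * slope2 x p) / 4) (1 + M));
      [lia | lra |].
    intros x p Hx Hp Hxp. pose proof (f_bound (x + p / 2) (y x + p * f x (y x) / 2) ltac:(lra)).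
    unfold slope2.
    rewrite Rabs_div, !Rabs_mult, (Rabs_pos_eq p), (Rabs_pos_eq 3), (Rabs_pos_eq 4) by lra. nra. }
  eapply bigO_ext; [| exact (rk3_order_conditions R2 R3 _ H2 H3 (y_expansion 2 ltac:(lia)))].
  intros x p _ _ _. unfold rk3_step, R3, R2, Dy. rewrite D_f. fold (slope2 x p). cbv zeta.
  replace (slope2 x p - _ + _) with (slope2 x p) by ring. field.
Qed.

Lemma rk3_step_lipschitz x eta u v : a <= x -> 0 <= eta -> x + eta <= b ->
  Rabs (rk3_step f x u eta - rk3_step f x v eta) <= (1 + (b - a) * M) ^ 3 * Rabs (u - v).
Proof.
  intros Hx He Hxe. pose proof M_nonneg as HM.
  set (c := eta * M). assert (Hc : 0 <= c) by (unfold c; nra).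
  assert (Hstage : forall t U V, x <= t <= x + eta ->
            Rabs (eta * f t U - eta * f t V) <= c * Rabs (U - V)).
  { intros t U V Ht. rewrite <- Rmult_minus_distr_l, Rabs_mult, Rabs_pos_eq by lra.
    unfold c. rewrite Rmult_assoc. apply Rmult_le_compat_l; [lra |].
    apply f_lipschitz. lra. }
  unfold rk3_step. cbv zeta.
  set (d := Rabs (u - v)). assert (Hd : 0 <= d) by apply Rabs_pos.
  set (k1 := eta * f x u). set (k1' := eta * f x v).
  set (k2 := eta * f (x + eta / 2) (u + k1 / 2)).
  set (k2' := eta * f (x + eta / 2) (v + k1' / 2)).
  set (k3 := eta * f (x + 3 * eta / 4) (u + 3 * k2 / 4)).
  set (k3' := eta * f (x + 3 * eta / 4) (v + 3 * k2' / 4)).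
  assert (H1 : Rabs (k1 - k1') <= c * d) by (apply Hstage; lra).
  assert (H2 : Rabs (k2 - k2') <= c * (1 + c) * d).
  { eapply Rle_trans; [apply Hstage; lra |].
    replace (u + k1 / 2 - (v + k1' / 2)) with ((u - v) + (k1 - k1') / 2) by field.
    pose proof (Rabs_triang (u - v) ((k1 - k1') / 2)).
    rewrite Rabs_div, (Rabs_pos_eq 2) in H by lra.
    assert (Rabs ((u - v) + (k1 - k1') / 2) <= (1 + c) * d) by (fold d in H; nra).
    rewrite Rmult_assoc. apply Rmult_le_compat_l; lra. }
  assert (H3 : Rabs (k3 - k3') <= c * (1 + c * (1 + c)) * d).
  { eapply Rle_trans; [apply Hstage; lra |].
    replace (u + 3 * k2 / 4 - (v + 3 * k2' / 4)) with ((u - v) + 3 / 4 * (k2 - k2')) by field.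
    pose proof (Rabs_triang (u - v) (3 / 4 * (k2 - k2'))).
    rewrite Rabs_mult, (Rabs_pos_eq (3 / 4)) in H by lra.
    assert (Rabs ((u - v) + 3 / 4 * (k2 - k2')) <= (1 + c * (1 + c)) * d) by (fold d in H; nra).
    rewrite Rmult_assoc. apply Rmult_le_compat_l; lra. }
  replace (u + 2 / 9 * k1 + 3 / 9 * k2 + 4 / 9 * k3 - (v + 2 / 9 * k1' + 3 / 9 * k2' + 4 / 9 * k3'))
    with ((u - v) + (2 / 9 * (k1 - k1') + (3 / 9 * (k2 - k2') + 4 / 9 * (k3 - k3')))) by ring.
  pose proof (Rabs_triang (u - v) (2 / 9 * (k1 - k1') + (3 / 9 * (k2 - k2') + 4 / 9 * (k3 - k3'))))
    as T1.
  pose proof (Rabs_triang (2 / 9 * (k1 - k1')) (3 / 9 * (k2 - k2') + 4 / 9 * (k3 - k3'))) as T2.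
  pose proof (Rabs_triang (3 / 9 * (k2 - k2')) (4 / 9 * (k3 - k3'))) as T3.
  rewrite Rabs_mult, (Rabs_pos_eq (2 / 9)) in T2 by lra.
  rewrite !Rabs_mult, (Rabs_pos_eq (3 / 9)), (Rabs_pos_eq (4 / 9)) in T3 by lra.
  fold d in T1.
  assert (0 <= c * d) by nra. assert (0 <= c * (c * d)) by nra.
  assert (0 <= c * (c * (c * d))) by nra.
  apply Rle_trans with ((1 + c) ^ 3 * d); [nra |].
  apply Rmult_le_compat_r, pow_incr; [exact Hd |]. unfold c. nra.
Qed.

Lemma rk3gl2_block_lipschitz : exists K, 0 <= K /\
  forall x h u v, a <= x -> 0 <= h -> x + 3 * h <= b ->
    Rabs (rk3gl2_block f x h u - rk3gl2_block f x h v) <= (1 + K * h) * Rabs (u - v).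
Proof.
  pose proof M_nonneg as HM.
  set (L := (1 + (b - a) * M) ^ 3).
  assert (HL1 : 1 <= L) by (apply pow_R1_Rle; nra).
  pose proof rk3_step_lipschitz as HL. fold L in HL.
  exists (3 / 2 * M * (L + L * L)). split; [nra |].
  intros x h u v Hx Hh Hxh.
  destruct (gl_nodes_ordered x h Hh) as [O1 [O2 O3]].
  unfold rk3gl2_block. cbv zeta.
  set (x1 := gl_node1 x h) in *. set (x2 := gl_node2 x h) in *.
  set (w1 := rk3_step f x u (x1 - x)). set (w1' := rk3_step f x v (x1 - x)).
  set (w2 := rk3_step f x1 w1 (x2 - x1)). set (w2' := rk3_step f x1 w1' (x2 - x1)).
  set (d := Rabs (u - v)). assert (Hd : 0 <= d) by apply Rabs_pos.
  assert (D1 : Rabs (w1 - w1') <= L * d) by (apply HL; lra).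
  assert (D2 : Rabs (w2 - w2') <= L * (L * d)).
  { eapply Rle_trans; [apply HL; lra |]. apply Rmult_le_compat_l; lra. }
  assert (F1 : Rabs (f x1 w1 - f x1 w1') <= M * (L * d)).
  { eapply Rle_trans; [apply f_lipschitz; lra |]. apply Rmult_le_compat_l; lra. }
  assert (F2 : Rabs (f x2 w2 - f x2 w2') <= M * (L * (L * d))).
  { eapply Rle_trans; [apply f_lipschitz; lra |]. apply Rmult_le_compat_l; lra. }
  replace (u + 3 * h / 2 * (f x1 w1 + f x2 w2) - (v + 3 * h / 2 * (f x1 w1' + f x2 w2')))
    with ((u - v) + 3 * h / 2 * ((f x1 w1 - f x1 w1') + (f x2 w2 - f x2 w2'))) by ring.
  eapply Rle_trans; [apply Rabs_triang |]. fold d.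
  rewrite Rabs_mult, (Rabs_pos_eq (3 * h / 2)) by lra.
  pose proof (Rabs_triang (f x1 w1 - f x1 w1') (f x2 w2 - f x2 w2')).
  assert (3 * h / 2 * Rabs ((f x1 w1 - f x1 w1') + (f x2 w2 - f x2 w2'))
          <= 3 * h / 2 * (M * (L * d) + M * (L * (L * d)))) by (apply Rmult_le_compat_l; lra).
  nra.
Qed.

Lemma rk3gl2_block_local_error : exists C, 0 <= C /\
  forall x h, a <= x -> 0 <= h -> x + 3 * h <= b ->
    Rabs (rk3gl2_block f x h (y x) - y (x + 3 * h)) <= C * h ^ 5.
Proof.
  pose proof M_nonneg as HM.
  destruct rk3_local_error as [K1 [HK1 Hrk3]].
  destruct (ydot_expansion 3 (le_n 3)) as [K2 [HK2 Hydot]].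
  destruct (y_expansion 3 (le_n 3)) as [K3 [HK3 Hy]].
  set (L := (1 + (b - a) * M) ^ 3).
  assert (HL1 : 1 <= L) by (apply pow_R1_Rle; nra).
  set (T := M * K1 + M * (L + 1) * K1 + 2 * K2).
  assert (HT : 0 <= T) by (unfold T; assert (0 <= M * K1) by nra; nra).
  exists (3 / 2 * 81 * T + 243 * K3). split; [nra |].
  intros x h Hx Hh Hxh.
  destruct inv_sqrt3_facts as [[Hs0 Hs1] Hs2]. set (s := 1 / sqrt 3) in *.
  set (p1 := 3 * h / 2 * (1 - s)). set (p2 := 3 * h / 2 * (1 + s)).
  assert (Hp : 0 <= p1 <= p2 /\ p2 <= 3 * h) by (unfold p1, p2; repeat split; nra).
  assert (Hpow : forall q, 0 <= q <= 3 * h -> q ^ 4 <= 81 * h ^ 4)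
    by (intros q Hq; replace (81 * h ^ 4) with ((3 * h) ^ 4) by ring; apply pow_incr; lra).
  unfold rk3gl2_block. cbv zeta.
  change (gl_node1 x h) with (x + p1). change (gl_node2 x h) with (x + p2).
  set (x1 := x + p1). set (x2 := x + p2).
  set (w1 := rk3_step f x (y x) (x1 - x)). set (w2 := rk3_step f x1 w1 (x2 - x1)).
  assert (E1 : Rabs (w1 - y x1) <= K1 * (81 * h ^ 4)).
  { unfold w1, x1. replace (x + p1 - x) with p1 by ring.
    eapply Rle_trans; [apply Hrk3; lra |]. apply Rmult_le_compat_l; [lra | apply Hpow; lra]. }
  assert (E2 : Rabs (w2 - y x2) <= (L + 1) * K1 * (81 * h ^ 4)).
  { replace (w2 - y x2) with ((w2 - rk3_step f x1 (y x1) (x2 - x1))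
                              + (rk3_step f x1 (y x1) (x2 - x1) - y x2)) by ring.
    eapply Rle_trans; [apply Rabs_triang |].
    assert (Rabs (w2 - rk3_step f x1 (y x1) (x2 - x1)) <= L * (K1 * (81 * h ^ 4))).
    { eapply Rle_trans; [apply rk3_step_lipschitz; unfold x1, x2; lra |].
      apply Rmult_le_compat_l; lra. }
    assert (Rabs (rk3_step f x1 (y x1) (x2 - x1) - y x2) <= K1 * (81 * h ^ 4)).
    { replace x2 with (x1 + (x2 - x1)) at 2 by ring.
      eapply Rle_trans; [apply Hrk3; unfold x1, x2; lra |].
      apply Rmult_le_compat_l; [lra | apply Hpow; unfold x1, x2; lra]. }
    lra. }
  assert (Q1 : Rabs (f x1 (y x1) - dpoly 3 x p1) <= K2 * (81 * h ^ 4)).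
  { eapply Rle_trans; [apply Hydot; unfold x1; lra |].
    apply Rmult_le_compat_l; [lra | apply Hpow; lra]. }
  assert (Q2 : Rabs (f x2 (y x2) - dpoly 3 x p2) <= K2 * (81 * h ^ 4)).
  { eapply Rle_trans; [apply Hydot; unfold x2; lra |].
    apply Rmult_le_compat_l; [lra | apply Hpow; lra]. }
  assert (Q0 : Rabs (y (x + 3 * h) - y x - ypoly 3 x (3 * h)) <= 243 * K3 * h ^ 5).
  { eapply Rle_trans; [apply Hy; lra |]. right. ring. }
  assert (GL : 3 * h / 2 * (dpoly 3 x p1 + dpoly 3 x p2) = ypoly 3 x (3 * h)).
  { pose proof (gauss_legendre2_exact_cubic (ycoef 0 x) (ycoef 1 x) (ycoef 2 x) (ycoef 3 x)
                 (3 * h) s Hs2) as G.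
    etransitivity; [| etransitivity; [exact G |]];
      unfold dpoly, ypoly, p1, p2; simpl; field. }
  assert (F1 : Rabs (f x1 w1 - f x1 (y x1)) <= M * (K1 * (81 * h ^ 4))).
  { eapply Rle_trans; [apply f_lipschitz; unfold x1; lra |]. apply Rmult_le_compat_l; lra. }
  assert (F2 : Rabs (f x2 w2 - f x2 (y x2)) <= M * ((L + 1) * K1 * (81 * h ^ 4))).
  { eapply Rle_trans; [apply f_lipschitz; unfold x2; lra |]. apply Rmult_le_compat_l; lra. }
  set (A1 := f x1 w1 - f x1 (y x1)) in *. set (A2 := f x2 w2 - f x2 (y x2)) in *.
  set (B1 := f x1 (y x1) - dpoly 3 x p1) in *. set (B2 := f x2 (y x2) - dpoly 3 x p2) in *.
  set (B0 := y (x + 3 * h) - y x - ypoly 3 x (3 * h)) in *.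
  replace (y x + 3 * h / 2 * (f x1 w1 + f x2 w2) - y (x + 3 * h))
    with (3 * h / 2 * (A1 + A2 + B1 + B2) - B0)
    by (unfold A1, A2, B1, B2, B0; rewrite <- GL; field).
  assert (S : Rabs (A1 + A2 + B1 + B2) <= T * (81 * h ^ 4)).
  { pose proof (Rabs_triang (A1 + A2 + B1) B2). pose proof (Rabs_triang (A1 + A2) B1).
    pose proof (Rabs_triang A1 A2). unfold T. lra. }
  unfold Rminus. eapply Rle_trans; [apply Rabs_triang |].
  rewrite Rabs_Ropp, Rabs_mult, (Rabs_pos_eq (3 * h / 2)) by lra.
  assert (3 * h / 2 * Rabs (A1 + A2 + B1 + B2) <= 3 * h / 2 * (T * (81 * h ^ 4)))
    by (apply Rmult_le_compat_l; lra).
  replace ((3 / 2 * 81 * T + 243 * K3) * h ^ 5)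
    with (3 * h / 2 * (T * (81 * h ^ 4)) + 243 * K3 * h ^ 5) by field.
  lra.
Qed.

Lemma rk3gl2_global_error : exists C, forall N : nat, (0 < N)%nat ->
  let h := (b - a) / (3 * INR N) in
  Rabs (rk3gl2_w f a h (y a) N - y b) <= C * h ^ 4.
Proof.
  destruct rk3gl2_block_local_error as [Cl [HCl Hlocal]].
  destruct rk3gl2_block_lipschitz as [K [HK Hlip]].
  set (T := (b - a) / 3).
  exists (exp (K * T) * Cl * T).
  intros N HN h.
  assert (HNpos : 0 < INR N) by (apply lt_0_INR; lia).
  assert (Hh : 0 < h) by (unfold h; apply Rdiv_lt_0_compat; lra).
  assert (HNh : INR N * h = T) by (unfold h, T; field; lra).
  assert (HT : 3 * T = b - a) by (unfold T; field).
  clearbody h.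
  set (e k := Rabs (rk3gl2_w f a h (y a) k - y (a + 3 * INR k * h))).
  assert (Hstep : forall k, (k < N)%nat -> e (S k) <= (1 + K * h) * e k + Cl * h ^ 5).
  { intros k Hk. unfold e. rewrite S_INR. simpl rk3gl2_w.
    set (xk := a + 3 * INR k * h).
    assert (Hk' : INR k + 1 <= INR N) by (rewrite <- S_INR; apply le_INR; lia).
    assert (Hxk : a <= xk) by (unfold xk; pose proof (pos_INR k); nra).
    assert (Hxkh : xk + 3 * h <= b)
      by (unfold xk; assert ((INR k + 1) * h <= INR N * h) by nra; lra).
    replace (a + 3 * (INR k + 1) * h) with (xk + 3 * h) by (unfold xk; ring).
    set (wk := rk3gl2_w f a h (y a) k).
    replace (rk3gl2_block f xk h wk - y (xk + 3 * h))
      with ((rk3gl2_block f xk h wk - rk3gl2_block f xk h (y xk))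
            + (rk3gl2_block f xk h (y xk) - y (xk + 3 * h))) by ring.
    eapply Rle_trans; [apply Rabs_triang |].
    apply Rplus_le_compat; [apply Hlip | apply Hlocal]; lra. }
  pose proof (error_recursion_bound e (K * h) (Cl * h ^ 5) N ltac:(nra)
                ltac:(apply Rmult_le_pos, pow_le; lra)
                ltac:(unfold e; simpl; rewrite Rmult_0_r, Rmult_0_l, Rplus_0_r, Rminus_diag;
                      apply Rabs_R0)
                Hstep) as Hglobal.
  unfold e in Hglobal. replace (a + 3 * INR N * h) with b in Hglobal by lra.
  eapply Rle_trans; [exact Hglobal |].
  replace (INR N * (1 + K * h) ^ N * (Cl * h ^ 5)) with ((1 + K * h) ^ N * (Cl * T * h ^ 4))
    by (rewrite <- HNh; ring).
  replace (exp (K * T) * Cl * T * h ^ 4) with (exp (K * T) * (Cl * T * h ^ 4)) by ring.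
  replace (K * T) with (INR N * (K * h)) by (rewrite <- HNh; ring).
  apply Rmult_le_compat_r.
  - apply Rmult_le_pos; [apply Rmult_le_pos; lra | apply pow_le; lra].
  - apply one_plus_pow_le_exp. nra.
Qed.

End ODE.

Theorem mainTheorem2 (f : R -> R -> R) (a b : R) (y : R -> R) :
  a < b ->
  smooth4_bounded a b f ->
  (forall x, a <= x <= b -> is_derive y x (f x (y x))) ->
  exists C h0 : R, 0 < h0 /\
    forall N : nat, (0 < N)%nat ->
      let h := (b - a) / (3 * INR N) in
      h <= h0 ->
      Rabs (rk3gl2_w f a h (y a) N - y b) <= C * h ^ 4.
Proof.
  intros Hab [D [D_f [D_derive [_ [M D_bound]]]]] y_ode.
  destruct (rk3gl2_global_error a b M f y D Hab D_f D_derive D_bound y_ode) as [C HC].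
  exists C, 1. split; [lra |].
  intros N HN h _. exact (HC N HN).
Qed.
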